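(* Let $(\Delta,R)$ be a gentle quiver with $f_{(\Delta,R)}=m\cdot[0,3]+[p+m+2,\,p]$ for some $m,p\in\mathbb N$, and let $\mathcal O_1,\dots,\mathcal O_{m'}$ be the pairwise different triangles in $(\Delta,R)$ (i.e. all of them). If $\alpha_i\in\mathcal O_i$ for each $i$ and $(\Delta',R'):=(\Delta,R)\setminus\{\alpha_i\mid i\in[1,m']\}$, then $(\Delta',R')$ is a gentle quiver of tree type, i.e. $|\Delta'_0|=|\Delta'_1|+1$.
   Context: A quiver $\Delta$ has finite vertex set $\Delta_0$, arrow set $\Delta_1$, maps $s,t$. A path of length $n\ge1$ is $(\alpha_1,\dots,\alpha_n)$ with $s\alpha_i=t\alpha_{i+1}$. A gentle quiver is $(\Delta,R)$ with $\Delta$ connected, $R$ a set of paths of length 2, such that: (1) each vertex is start of at most two arrows and end of at most two arrows; (2) for each arrow $\alpha$ at most one $\beta$ with $s\beta=t\alpha$, $(\beta,\alpha)\notin R$ and at most one $\gamma$ with $t\gamma=s\alpha$, $(\alpha,\gamma)\notin R$; (3) for each $\alpha$ at most one $\beta$ with $(\beta,\alpha)\in R$ and at most one $\gamma$ with $(\alpha,\gamma)\in R$; (4) for some $n$ every path of length $n$ has a subpath in $R$. Invariant: fix $\sigma,\tau:\Delta_1\to\{\pm1\}$ with distinct arrows of same start having opposite $\sigma$, distinct arrows of same end opposite $\tau$, and for $s\alpha=t\beta$: $(\alpha,\beta)\in R$ iff $\sigma\alpha=\tau\beta$; $\sigma\omega=\sigma\alpha_n,\tau\omega=\tau\alpha_1$.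 Permitted paths: no consecutive pair in $R$, plus trivial $1_{x,\varepsilon}$ ($s=t=x$, $\sigma=\varepsilon,\tau=-\varepsilon$); maximal if no arrow $\alpha$ with $s\alpha=t\omega,\sigma\alpha=-\tau\omega$ and no $\beta$ with $t\beta=s\omega,\tau\beta=-\sigma\omega$; set $\mathcal M$. Antipaths: all consecutive pairs in $R$, plus trivial $1'_{x,\varepsilon}$ ($\sigma=\tau=\varepsilon$); maximal if no $\alpha$ with $s\alpha=t\omega,\sigma\alpha=\tau\omega$ and no $\beta$ with $t\beta=s\omega,\tau\beta=\sigma\omega$; set $\mathcal N$. $\phi:\mathcal M\to\mathcal N$, $\omega\mapsto$ unique $\omega'$ with $t\omega'=t\omega,\tau\omega'=-\tau\omega$; $\psi:\mathcal N\to\mathcal M$, $\omega\mapsto$ unique $\omega'$ with $s\omega'=s\omega,\sigma\omega'=-\sigma\omega$; $\Phi=\phi\psi$; $\Phi$-orbit: $p=|\mathcal O|$, $q=$ total length. $\mathcal C$: arrows $\alpha$ with $(\alpha)$ not a subpath of a maximal antipath; $\Psi(\alpha)=$ unique $\beta\in\mathcal C$ with $t\beta=s\alpha,\tau\beta=\sigma\alpha$; $\Psi$-orbit: $p=0$, $q=|\mathcal O|$. $f(p,q)=$ number of orbits with these values; $[p,q]$ the characteristic function of $\{(p,q)\}$. A triangle is a $\Psi$-orbit with exactly 3 elements. For $\Delta_1'\subset\Delta_1$, $(\Delta,R)\setminus\Delta_1'$ has the same vertices, arrows $\Delta_1\setminus\Delta_1'$, and relations those $\rho\in R$ containing no arrow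 of $\Delta_1'$. *)

From Stdlib Require Import Relations.Relation_Operators.
From HB Require Import structures.
From mathcomp Require Import all_boot.

Set Implicit Arguments.
Unset Strict Implicit.
Unset Printing Implicit Defensive.

(* A quiver with finite vertex set qV, finite arrow set qA, source/target maps,
   and a set of length-2 paths qR : qR a b means the path (a,b) (i.e. s a = t b,
   a applied after b, composition right-to-left as in the paper) lies in R. *)
Record quiver := Quiver {
  qV : finType; qA : finType;
  qs : qA -> qV; qt : qA -> qV;
  qR : rel qA }.

Definition is_qpath (Q : quiver) (w : seq (qA Q)) : bool :=
  (w != [::]) && sorted (fun a b => qs a == qt b) w.

Definition qadj (Q : quiver) : rel (qV Q) := fun u v =>
  [exists a, ((qs a == u) && (qt a == v)) || ((qs a == v) && (qt a == u))].

Definition qconnected (Q : quiver) : Prop :=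
  forall x y : qV Q, connect (@qadj Q) x y.

Definition gentle (Q : quiver) : Prop :=
  qconnected Q /\
  [/\
      (forall a b : qA Q, qR a b -> qs a = qt b),
      (forall x : qV Q, #|[set a | qs a == x]| <= 2 /\ #|[set a | qt a == x]| <= 2),
      (forall a : qA Q, #|[set b | (qs b == qt a) && ~~ qR b a]| <= 1 /\
                        #|[set c | (qt c == qs a) && ~~ qR a c]| <= 1),
      (forall a : qA Q, #|[set b | qR b a]| <= 1 /\ #|[set c | qR a c]| <= 1) &
      exists n, 0 < n /\ forall w : seq (qA Q), is_qpath w -> size w = n ->
        exists w1 a b w2, w = w1 ++ a :: b :: w2 /\ qR a b].

(* sign functions sigma, tau : arrows -> {+1,-1}, with +1 = true, -1 = false *)
Definition valid_signs (Q : quiver) (sg ta : qA Q -> bool) : Prop :=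
  [/\ (forall a b, a != b -> qs a = qs b -> sg a != sg b),
      (forall a b, a != b -> qt a = qt b -> ta a != ta b) &
      (forall a b, qs a = qt b -> (qR a b <-> sg a = ta b))].

(* Candidate (anti)paths: inl (x, e) is the trivial path at x with sign e
   (1_{x,e} for permitted paths, 1'_{x,e} for antipaths);
   inr (a, w) is the nontrivial sequence a :: w = (a1,...,an). *)
Notation qpath Q := ((qV Q * bool) + (qA Q * seq (qA Q)))%type.

Section PathData.
Variable Q : quiver.
Variables sg ta : qA Q -> bool.

Definition parrows (p : qpath Q) : seq (qA Q) :=
  match p with inl _ => [::] | inr (a, w) => a :: w end.
Definition psrc (p : qpath Q) : qV Q :=
  match p with inl (x, _) => x | inr (a, w) => qs (last a w) end.
Definition ptgt (p : qpath Q) : qV Q :=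
  match p with inl (x, _) => x | inr (a, _) => qt a end.
Definition plen (p : qpath Q) : nat :=
  match p with inl _ => 0 | inr (_, w) => (size w).+1 end.
Definition psig (p : qpath Q) : bool :=
  match p with inl (_, e) => e | inr (a, w) => sg (last a w) end.
Definition ptauM (p : qpath Q) : bool :=
  match p with inl (_, e) => ~~ e | inr (a, _) => ta a end.
Definition ptauN (p : qpath Q) : bool :=
  match p with inl (_, e) => e | inr (a, _) => ta a end.

Definition isPermitted (p : qpath Q) : bool :=
  match p with
  | inl _ => true
  | inr (a, w) => path (fun x y => (qs x == qt y) && ~~ qR x y) a w
  end.
Definition isAnti (p : qpath Q) : bool :=
  match p with
  | inl _ => true
  | inr (a, w) => path (fun x y => (qs x == qt y) && qR x y) a w
  end.

Definition isM (p : qpath Q) : bool :=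
  [&& isPermitted p,
      ~~ [exists a, (qs a == ptgt p) && (sg a == ~~ ptauM p)] &
      ~~ [exists b, (qt b == psrc p) && (ta b == ~~ psig p)]].
Definition isN (p : qpath Q) : bool :=
  [&& isAnti p,
      ~~ [exists a, (qs a == ptgt p) && (sg a == ptauN p)] &
      ~~ [exists b, (qt b == psrc p) && (ta b == psig p)]].

(* graphs of phi : M -> N, psi : N -> M and Phi = phi o psi : N -> N *)
Definition phiR (p p' : qpath Q) : Prop :=
  isM p /\ isN p' /\ ptgt p' = ptgt p /\ ptauN p' = ~~ ptauM p.
Definition psiR (p p' : qpath Q) : Prop :=
  isN p /\ isM p' /\ psrc p' = psrc p /\ psig p' = ~~ psig p.
Definition PhiR (p p'' : qpath Q) : Prop :=
  exists p', psiR p p' /\ phiR p' p''.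

Definition PhiOrb (p : qpath Q) : qpath Q -> Prop := clos_refl_trans _ PhiR p.

Definition inC (a : qA Q) : Prop := ~ exists p, isN p /\ a \in parrows p.
Definition PsiR (a b : qA Q) : Prop :=
  inC a /\ inC b /\ qt b = qs a /\ ta b = sg a.
Definition PsiOrb (a : qA Q) : qA Q -> Prop := clos_refl_trans _ PsiR a.

End PathData.

Definition fin_enum (T : eqType) (P : T -> Prop) (s : seq T) : Prop :=
  uniq s /\ forall x, P x <-> x \in s.

(* representatives (minimal code in the orbit) of Phi-orbits with p = x, q = y *)
Definition PhiRep (Q : quiver) (sg ta : qA Q -> bool) (x y : nat) (p : qpath Q) : Prop :=
  isN sg ta p /\
  (forall p', PhiOrb sg ta p p' -> pickle p <= pickle p') /\
  exists s, fin_enum (PhiOrb sg ta p) s /\ size s = x /\ sumn (map (@plen Q) s) = y.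

(* representatives of Psi-orbits with p = 0 = x, q = |O| = y *)
Definition PsiRep (Q : quiver) (sg ta : qA Q -> bool) (x y : nat) (a : qA Q) : Prop :=
  x = 0 /\ inC sg ta a /\
  (forall b, PsiOrb sg ta a b -> pickle a <= pickle b) /\
  exists s, fin_enum (PsiOrb sg ta a) s /\ size s = y.

(* f_{(Delta,R)}(x,y) = n : n orbits (Phi- or Psi-) with values (x,y) *)
Definition f_is (Q : quiver) (sg ta : qA Q -> bool) (x y n : nat) : Prop :=
  exists n1 n2, n = n1 + n2 /\
    (exists s, fin_enum (PhiRep sg ta x y) s /\ size s = n1) /\
    (exists s, fin_enum (PsiRep sg ta x y) s /\ size s = n2).

(* a lies in a triangle (a Psi-orbit with exactly 3 elements) *)
Definition in_triangle (Q : quiver) (sg ta : qA Q -> bool) (a : qA Q) : Prop :=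
  inC sg ta a /\ exists s, fin_enum (PsiOrb sg ta a) s /\ size s = 3.

Definition triangle_selection (Q : quiver) (sg ta : qA Q -> bool) (D : {set qA Q}) : Prop :=
  (forall d, d \in D -> in_triangle sg ta d) /\
  (forall a, in_triangle sg ta a -> exists! d, d \in D /\ PsiOrb sg ta a d).

Definition qremove (Q : quiver) (D : {set qA Q}) : quiver :=
  @Quiver (qV Q) {a : qA Q | a \notin D}
          (fun a => qs (val a)) (fun a => qt (val a))
          (fun a b => qR (val a) (val b)).

(* Under the signs, arrows are matched by the partial bijection (qt b, ta b) |-> (qs a, sg a)
   exactly when (a, b) is a relation, so maximal antipaths are the maximal chains of this
   bijection.  A maximal chain is determined by its target point, a pair (x, e) not of the
   form (qs a, sg a); hence |N| = 2|Delta_0| - |Delta_1|, and the maximal antipaths partition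
   the arrows outside C.  Phi permutes the finite set N, so every element of N lies in an orbit
   counted by f: the hypothesis forces N to be one orbit, with p + m + 2 elements of total
   length p, and C to consist of m triangles.  Thus |Delta_1| = p + 3m, |Delta_0| = p + 2m + 1,
   and removing one arrow per triangle leaves p + 2m arrows.  Connectivity survives because
   the two remaining arrows of a triangle join the endpoints of the removed one. *)

From HB Require Import structures.
From mathcomp Require Import all_boot zify.
From Stdlib Require Import Relations.Relation_Operators Relations.Operators_Properties.
From Stdlib Require Import Classical ClassicalEpsilon.

Set Implicit Arguments.
Unset Strict Implicit.
Unset Printing Implicit Defensive.

Section Chains.
Variables (A S : finType) (outp inp : A -> S).
Hypothesis inp_inj : injective inp.

Definition link : rel A := fun x y => outp x == inp y.
Definition terminal (x : A) := [forall b, inp b != outp x].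
Definition initial (x : A) := [forall b, outp b != inp x].

Lemma terminal_path_unique x s1 s2 : path link x s1 -> path link x s2 ->
  terminal (last x s1) -> terminal (last x s2) -> s1 = s2.
Proof.
elim: s1 x s2 => [|y s1 IH] x [|z s2] //=.
- by move=> _ /andP[/eqP h _] /forallP /(_ z); rewrite h eqxx.
- by move=> /andP[/eqP h _] _ _ /forallP /(_ y); rewrite h eqxx.
move=> /andP[/eqP h1 p1] /andP[/eqP h2 p2] n1 n2.
have yz : y = z by apply: inp_inj; rewrite -h1 -h2.
by rewrite -yz in p2 n2 *; rewrite (IH _ _ p1 p2 n1 n2).
Qed.

Lemma terminal_path_uniq x w : path link x w -> terminal (last x w) -> uniq (x :: w).
Proof.
elim: w x => [|y w IH] x // pw np.
have /= /andP[_ pyw] := pw.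
rewrite /= in IH *; rewrite (IH y pyw np) andbT; apply/negP => xin.
case/splitPr: xin pw np => u v pw np.
have pv : path link x v by move: pw; rewrite cat_path /= => /and3P[_ _ ->].
move: np; rewrite last_cat /= => np.
have := terminal_path_unique pw pv; rewrite last_cat /= => /(_ np np) /(congr1 size).
by rewrite size_cat /=; lia.
Qed.

End Chains.

Lemma last_rev (T : Type) (x0 : T) s : last x0 (rev s) = head x0 s.
Proof. by case: s => //= a s; rewrite rev_cons last_rcons. Qed.

Lemma head_belast (T : Type) (a : T) w : head (last a w) (belast a w) = a.
Proof. by case: w. Qed.

Lemma head_cat_cons (T : Type) (x0 c : T) u v : head x0 (u ++ c :: v) = head c u.
Proof. by case: u. Qed.

Lemma sorted_link_rev (A S : finType) (outp inp : A -> S) s :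
  sorted (link outp inp) s = sorted (link inp outp) (rev s).
Proof.
rewrite rev_sorted; case: s => //= a s; apply: eq_path => x y.
by rewrite /link eq_sym.
Qed.

Lemma terminal_sorted_uniq (A S : finType) (outp inp : A -> S) (inp_inj : injective inp)
  s x0 : sorted (link outp inp) s -> terminal outp inp (last x0 s) -> uniq s.
Proof. by case: s => [|x w] //; exact: terminal_path_uniq. Qed.

Lemma initial_sorted_uniq (A S : finType) (outp inp : A -> S) (outp_inj : injective outp)
  s x0 : sorted (link outp inp) s -> initial outp inp (head x0 s) -> uniq s.
Proof.
rewrite sorted_link_rev -(rev_uniq s) -(last_rev x0 s).
exact: terminal_sorted_uniq.
Qed.

Lemma initial_path_unique (A S : finType) (outp inp : A -> S) (outp_inj : injective outp)
  y u1 u2 : sorted (link outp inp) (rcons u1 y) -> sorted (link outp inp) (rcons u2 y) ->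
  initial outp inp (head y u1) -> initial outp inp (head y u2) -> u1 = u2.
Proof.
rewrite !(sorted_link_rev outp inp) !rev_rcons /= -(last_rev y u1) -(last_rev y u2).
by move=> h1 h2 n1 n2; rewrite -(revK u1) (terminal_path_unique outp_inj h1 h2 n1 n2) revK.
Qed.

(* Linked paths from an initial element are duplicate-free, hence shorter than [#|A|]; so
   extending one eventually reaches a terminal element. *)
Lemma initial_path_to_terminal (A S : finType) (outp inp : A -> S) (outp_inj : injective outp)
  x : initial outp inp x -> exists w, path (link outp inp) x w /\ terminal outp inp (last x w).
Proof.
move=> ix.
have grow w : path (link outp inp) x w -> ~~ terminal outp inp (last x w) ->
    exists b, path (link outp inp) x (rcons w b) /\ size w + 2 <= #|A|.
  move=> pw /forallPn [b]; rewrite negbK => /eqP hb.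
  have pwb : path (link outp inp) x (rcons w b) by rewrite rcons_path pw /link hb eqxx.
  have uniq_xwb : uniq (x :: rcons w b) :=
    initial_sorted_uniq (s := x :: rcons w b) (x0 := x) outp_inj pwb ix.
  exists b; split => //; have := max_card (mem (x :: rcons w b)).
  by rewrite (card_uniqP uniq_xwb) /= size_rcons addn2.
suff H n w : #|A| - size w <= n -> path (link outp inp) x w ->
    exists w', path (link outp inp) x w' /\ terminal outp inp (last x w').
  by apply: (H #|A| [::]); rewrite ?subn0.
elim: n w => [|n IH] w hn pw; case: (boolP (terminal outp inp (last x w))) => [tw|ntw];
  try by exists w.
- by have [b [_ sz]] := grow w pw ntw; lia.
- have [b [pb sz]] := grow w pw ntw.
  by apply: (IH (rcons w b)) => //; rewrite size_rcons; lia.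
Qed.

Lemma terminal_path_from_initial (A S : finType) (outp inp : A -> S) (inp_inj : injective inp)
  y : terminal outp inp y ->
  exists u, sorted (link outp inp) (rcons u y) /\ initial outp inp (head y u).
Proof.
move=> ty; have [w [pw lw]] := initial_path_to_terminal inp_inj ty.
exists (rev w); rewrite sorted_link_rev rev_rcons revK -(last_rev y (rev w)) revK.
by split.
Qed.

(* Maximal antipaths and maximal permitted paths are maximal chains; [inl z] stands for the
   trivial path at [z]. *)
Section MaximalChains.
Variables (A S : finType) (outp inp : A -> S).
Hypotheses (outp_inj : injective outp) (inp_inj : injective inp).

Local Notation chain := (S + (A * seq A))%type.

Definition maximal_chain (p : chain) : bool :=
  match p with
  | inl z => [forall b, outp b != z] && [forall b, inp b != z]
  | inr (a, w) =>
    [&& path (link outp inp) a w, initial outp inp a & terminal outp inp (last a w)]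
  end.
Definition chain_tgt (p : chain) : S :=
  match p with inl z => z | inr (a, _) => inp a end.
Definition chain_src (p : chain) : S :=
  match p with inl z => z | inr (a, w) => outp (last a w) end.
Definition chain_elems (p : chain) : seq A :=
  match p with inl _ => [::] | inr (a, w) => a :: w end.

Lemma maximal_chain_tgt_inj p p' : maximal_chain p -> maximal_chain p' ->
  chain_tgt p = chain_tgt p' -> p = p'.
Proof.
case: p => [z|[a w]]; case: p' => [z'|[a' w']] /=.
- by move=> _ _ ->.
- by move=> /andP[_ /forallP /(_ a') ne] _ e; rewrite e eqxx in ne.
- by move=> _ /andP[_ /forallP /(_ a) ne] e; rewrite e eqxx in ne.
move=> /and3P[p1 _ n1] /and3P[p2 _ n2] /inp_inj e; rewrite -e in p2 n2 *.
by rewrite (terminal_path_unique inp_inj p1 p2 n1 n2).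
Qed.

Lemma maximal_chain_src_inj p p' : maximal_chain p -> maximal_chain p' ->
  chain_src p = chain_src p' -> p = p'.
Proof.
case: p => [z|[a w]]; case: p' => [z'|[a' w']] /=.
- by move=> _ _ ->.
- by move=> /andP[/forallP /(_ (last a' w')) ne _] _ e; rewrite e eqxx in ne.
- by move=> _ /andP[/forallP /(_ (last a w)) ne _] e; rewrite e eqxx in ne.
move=> /and3P[p1 s1 _] /and3P[p2 s2 _] /outp_inj e.
have h1 : sorted (link outp inp) (rcons (belast a w) (last a w)) by rewrite -lastI.
have h2 : sorted (link outp inp) (rcons (belast a' w') (last a w)) by rewrite e -lastI.
have := initial_path_unique outp_inj h1 h2; rewrite head_belast e head_belast => /(_ s1 s2) eb.
have : a :: w = a' :: w' by rewrite lastI eb e -lastI.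
by case=> -> ->.
Qed.

Lemma maximal_chain_ends p :
  maximal_chain p -> [forall b, outp b != chain_tgt p] /\ [forall b, inp b != chain_src p].
Proof. by case: p => [z /andP[]|[a w] /and3P[]]. Qed.

Lemma maximal_chain_of_tgt z :
  [forall b, outp b != z] -> exists p, maximal_chain p /\ chain_tgt p = z.
Proof.
move=> oz; case: (boolP [exists b, inp b == z]) => [/existsP [x /eqP ixz]|].
  have ix : initial outp inp x by rewrite /initial ixz.
  have [w [pw tw]] := initial_path_to_terminal outp_inj ix.
  by exists (inr (x, w)); rewrite /= pw ix tw.
by rewrite negb_exists => iz; exists (inl z); rewrite /= oz.
Qed.

Lemma maximal_chain_of_src z :
  [forall b, inp b != z] -> exists p, maximal_chain p /\ chain_src p = z.
Proof.
move=> iz; case: (boolP [exists b, outp b == z]) => [/existsP [y /eqP oyz]|].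
  have ty : terminal outp inp y by rewrite /terminal oyz.
  have [[|h t] [su iu]] := terminal_path_from_initial inp_inj ty.
    by exists (inr (y, [::])); rewrite /= ty iu.
  by exists (inr (h, rcons t y)); rewrite /= last_rcons oyz; split => //; apply/and3P.
by rewrite negb_exists => oz; exists (inl z); rewrite /= iz oz.
Qed.

Lemma maximal_chain_uniq p : maximal_chain p -> uniq (chain_elems p).
Proof. by case: p => [z|[a w]] // /and3P[pw _ tw]; exact: terminal_path_uniq tw. Qed.

Lemma maximal_seq_unique (s1 s2 : seq A) c : c \in s1 -> c \in s2 ->
  sorted (link outp inp) s1 -> sorted (link outp inp) s2 ->
  initial outp inp (head c s1) -> initial outp inp (head c s2) ->
  terminal outp inp (last c s1) -> terminal outp inp (last c s2) -> s1 = s2.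
Proof.
case/splitPr => u1 v1; case/splitPr => u2 v2.
rewrite !sorted_cat_cons => /andP[r1 p1] /andP[r2 p2].
rewrite !head_cat_cons !last_cat /= => h1 h2 l1 l2.
by rewrite (terminal_path_unique inp_inj p1 p2 l1 l2) (initial_path_unique outp_inj r1 r2 h1 h2).
Qed.

Lemma maximal_chain_disjoint p p' c : maximal_chain p -> maximal_chain p' ->
  c \in chain_elems p -> c \in chain_elems p' -> p = p'.
Proof.
case: p => [z|[a w]] //; case: p' => [z'|[a' w']] // /and3P[p1 s1 n1] /and3P[p2 s2 n2] c1 c2.
by case: (maximal_seq_unique c1 c2 p1 p2 s1 s2 n1 n2) => -> ->.
Qed.

Lemma maximal_chain_mem_link p b g :
  maximal_chain p -> b \in chain_elems p -> outp g = inp b -> g \in chain_elems p.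
Proof.
case: p => [z|[a w]] // /and3P[pw ia _] /=.
have : sorted (link outp inp) (a :: w) by [].
have : initial outp inp (head b (a :: w)) by [].
move: (a :: w) => s + + bs; case/splitPr: bs => u v.
rewrite head_cat_cons sorted_cat_cons; case/lastP: u => [|u d] /=.
  by move=> /forallP /(_ g) + _ e; rewrite e eqxx.
move=> _ /andP[srt _] e.
have /eqP e2 : link outp inp d b.
  by case: u srt => [/andP[]|h t] //=; rewrite rcons_path last_rcons => /andP[].
have -> : g = d by apply: outp_inj; rewrite e e2.
by rewrite mem_cat mem_rcons mem_head.
Qed.

Lemma maximal_chain_of_terminal c :
  terminal outp inp c -> exists p, maximal_chain p /\ c \in chain_elems p.
Proof.
move=> /maximal_chain_of_src [[z|[a w]] [mp src]] /=.
  by move: mp => /andP[/forallP /(_ c)]; rewrite -src eqxx.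
by exists (inr (a, w)); split => //=; move: src => /= /outp_inj <-; exact: mem_last.
Qed.

End MaximalChains.

Definition classicb (P : Prop) : bool := if excluded_middle_informative P then true else false.

Lemma classicbP P : reflect P (classicb P).
Proof. by rewrite /classicb; case: excluded_middle_informative => h; constructor. Qed.

Lemma enum_of_inj (T : eqType) (S : finType) (P : T -> Prop) (g : T -> S) :
  (forall x y, P x -> P y -> g x = g y -> x = y) -> exists s : seq T, forall x, P x -> x \in s.
Proof.
move=> g_inj.
suff [s Hs] : exists s : seq T, forall x, P x -> g x \in enum S -> x \in s.
  by exists s => x Px; apply: Hs; rewrite ?mem_enum.
elim: (enum S) => [|z l [s Hs]]; first by exists [::].
case: (classic (exists x, P x /\ g x = z)) => [[x0 [P0 g0]]|nex].
  exists (x0 :: s) => x Px; rewrite in_cons => /orP [/eqP e|xl].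
    by rewrite (g_inj x x0 Px P0 (etrans e (esym g0))) eqxx.
  by rewrite Hs ?orbT.
exists s => x Px; rewrite in_cons => /orP [/eqP e|xl]; last exact: Hs.
by case: nex; exists x.
Qed.

Lemma exists_min_pickle (T : countType) (P : T -> Prop) x : P x ->
  exists r, P r /\ forall y, P y -> pickle r <= pickle y.
Proof.
elim/ltn_ind: (pickle x) {-2}x (erefl (pickle x)) => n IH {}x px Px.
case: (classic (exists y, P y /\ pickle y < n)) => [[y [Py lt]]|nex].
  exact: IH lt y erefl Py.
exists x; split => // y Py; rewrite px leqNgt; apply/negP => lt.
by apply: nex; exists y.
Qed.

Section FiniteBijection.
Variables (T : eqType) (P : T -> Prop) (R : T -> T -> Prop) (s : seq T).
Hypotheses (R_P : forall x y, R x y -> P y)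
  (R_total : forall x, P x -> exists y, R x y)
  (R_functional : forall x y y', R x y -> R x y' -> y = y')
  (R_injective : forall x x' y, R x y -> R x' y -> x = x')
  (P_finite : forall x, P x -> x \in s).

Definition rel_next (x : T) : T :=
  match excluded_middle_informative (exists y, R x y) with
  | left H => proj1_sig (constructive_indefinite_description _ H)
  | right _ => x
  end.

Lemma rel_nextP x : P x -> R x (rel_next x).
Proof.
move=> Px; rewrite /rel_next; case: excluded_middle_informative => [H|[]].
  exact: proj2_sig (constructive_indefinite_description _ H).
exact: R_total.
Qed.

Lemma iter_rel_next_P n x : P x -> P (iter n rel_next x).
Proof. by elim: n => //= n IH Px; apply: R_P (rel_nextP (IH Px)). Qed.

Lemma rt_iter_rel_next n x : P x -> clos_refl_trans T R x (iter n rel_next x).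
Proof.
elim: n => [|n IH] Px /=; first exact: rt_refl.
exact: rt_trans (IH Px) (rt_step _ _ _ _ (rel_nextP (iter_rel_next_P n Px))).
Qed.

Lemma rt_iter_rel_nextP x y : P x -> clos_refl_trans T R x y -> exists n, y = iter n rel_next x.
Proof.
move=> Px /clos_rt_rt1n_iff H; elim: H Px => [z|a b c hab _ IH] Pa; first by exists 0.
have eb : b = rel_next a by apply: R_functional hab (rel_nextP Pa).
by have [n ->] := IH (R_P hab); exists n.+1; rewrite iterSr -eb.
Qed.

Lemma iter_rel_next_cancel x j k : P x -> iter j rel_next x = iter (j + k) rel_next x -> x = iter k rel_next x.
Proof.
move=> Px; elim: j => //= j IH e; apply: IH.
by apply: R_injective (rel_nextP (iter_rel_next_P _ Px)) _; rewrite e; exact: rel_nextP (iter_rel_next_P _ Px).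
Qed.

(* Pigeonhole on the first [size s + 1] iterates. *)
Lemma iter_rel_next_period x : P x -> exists2 d, 0 < d & iter d rel_next x = x.
Proof.
move=> Px; set l := [seq iter k rel_next x | k <- iota 0 (size s).+1].
have : ~~ uniq l.
  apply/negP => ul; have /uniq_leq_size : {subset l <= s}.
    by move=> y /mapP [k _ ->]; exact: P_finite (iter_rel_next_P _ Px).
  by move=> /(_ ul); rewrite size_map size_iota ltnn.
case/(uniqPn x) => j [k [jk kl]]; rewrite size_map size_iota in kl.
rewrite !(nth_map 0) ?nth_iota ?size_iota ?add0n; try lia.
move=> e; exists (k - j); first lia.
by apply/esym/(iter_rel_next_cancel (j := j) Px); rewrite subnKC // ltnW.
Qed.

Lemma rt_sym_finite x y : P x -> clos_refl_trans T R x y -> clos_refl_trans T R y x.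
Proof.
move=> Px /(rt_iter_rel_nextP Px) [n ->].
have [d d_gt0 dx] := iter_rel_next_period Px.
have dkx k : iter (d * k) rel_next x = x by elim: k => [|k IH]; rewrite ?muln0 // mulnS iterD IH dx.
have := rt_iter_rel_next (d * n - n) (iter_rel_next_P n Px).
by rewrite -iterD subnK ?dkx // leq_pmull.
Qed.

End FiniteBijection.

Lemma card_enum (T : finType) (P : pred T) (s : seq T) :
  uniq s -> (forall x, P x <-> x \in s) -> #|P| = size s.
Proof.
move=> us h; rewrite -(card_uniqP us); apply: eq_card => x.
by apply/idP/idP => /h.
Qed.

Lemma flatten_uniq (T U : eqType) (g : T -> seq U) (s : seq T) :
  uniq s -> (forall x, x \in s -> uniq (g x)) ->
  (forall x y c, x \in s -> y \in s -> c \in g x -> c \in g y -> x = y) ->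
  uniq (flatten (map g s)).
Proof.
elim: s => [|x s IH] //= /andP[xs us] gu gd.
rewrite cat_uniq gu ?mem_head // IH //; last first.
- by move=> y z c ys zs; apply: gd; rewrite in_cons ?ys ?zs orbT.
- by move=> y ys; apply: gu; rewrite in_cons ys orbT.
rewrite andbT; apply/hasPn => c /flattenP [l /mapP [y ys ->] cy]; apply/negP => cx.
have exy : x = y by apply: (gd x y c) => //; rewrite in_cons ?ys ?eqxx ?orbT.
by move: xs; rewrite exy ys.
Qed.

Lemma card_qremove_arrows (Q : quiver) (D : {set qA Q}) : #|qA (qremove D)| = #|~: D|.
Proof. by rewrite /= card_sig; apply: eq_card => a; rewrite !inE. Qed.

Lemma qremove_adj (Q : quiver) (D : {set qA Q}) a : a \notin D ->
  @qadj (qremove D) (qs a) (qt a) && @qadj (qremove D) (qt a) (qs a).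
Proof.
by move=> aD; apply/andP; split; apply/existsP; exists (exist _ a aD); rewrite /= !eqxx ?orbT.
Qed.

Lemma card_sig_set_le (A : finType) (P0 P : pred A) :
  #|[set x : {a | P0 a} | P (val x)]| <= #|[set a | P a]|.
Proof.
rewrite -(card_imset _ val_inj); apply: subset_leq_card.
by apply/subsetP => y /imsetP [x]; rewrite !inE => hx ->.
Qed.

Lemma map_val_subpath (A : finType) (P0 : pred A) (r : rel A) (w : seq {a | P0 a}) :
  (exists w1 a b w2, map val w = w1 ++ a :: b :: w2 /\ r a b) ->
  exists w1 a b w2, w = w1 ++ a :: b :: w2 /\ r (val a) (val b).
Proof.
elim: w => [|x w IH] [w1 [a [b [w2 [e rab]]]]]; first by case: w1 e.
case: w1 e => [|c w1] /= [ex e].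
  case: w {IH} e => [|y w] //= [ey e].
  by exists [::], x, y, w; split => //; rewrite ex ey.
have [|v1 [a' [b' [v2 [-> r']]]]] := IH; first by exists w1, a, b, w2.
by exists (x :: v1), a', b', v2.
Qed.

(* Conditions (1)-(4) pass to subquivers; only connectivity needs the endpoints of each
   removed arrow to stay connected. *)
Lemma qremove_gentle (Q : quiver) (D : {set qA Q}) : gentle Q ->
  (forall a, a \in D -> connect (@qadj (qremove D)) (qs a) (qt a)) -> gentle (qremove D).
Proof.
move=> [conn [R_len deg nonR R_uniq [n [n_gt0 R_nil]]]] D_conn.
have sub_le (P : pred (qA Q)) k :
    #|[set a | P a]| <= k -> #|[set x : qA (qremove D) | P (val x)]| <= k.
  exact: leq_trans (card_sig_set_le _ _).
split; last split.
- have adj_sym : connect_sym (@qadj (qremove D)).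
    apply: sym_connect_sym => u v; apply/existsP/existsP => [] [a ha];
    by exists a; rewrite orbC.
  have arc (a : qA Q) : connect (@qadj (qremove D)) (qs a) (qt a).
    case: (boolP (a \in D)) => [/D_conn //|aD].
    by apply: connect1; case/andP: (qremove_adj aD).
  move=> x y; apply: connect_sub (conn x y) => u v.
  move=> /existsP [a /orP [] /andP [/eqP <- /eqP <-]]; first exact: arc.
  by rewrite adj_sym; exact: arc.
- by move=> a b /R_len.
- by move=> x; have [d1 d2] := deg x; split; [exact: sub_le d1 | exact: sub_le d2].
- by move=> a; have [d1 d2] := nonR (val a); split; [exact: sub_le d1 | exact: sub_le d2].
- by move=> a; have [d1 d2] := R_uniq (val a); split; [exact: sub_le d1 | exact: sub_le d2].
exists n; split => // w /andP [w_nil w_path] w_size.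
apply: (map_val_subpath (r := @qR Q)); apply: R_nil; last by rewrite size_map.
by rewrite /is_qpath sorted_map w_path andbT; case: w w_nil {w_path w_size}.
Qed.

Lemma fin_enum_size_gt0 (T : eqType) (P : T -> Prop) s x : fin_enum P s -> P x -> 0 < size s.
Proof. by move=> [_ h] /h; case: s {h}. Qed.

Lemma negb_eq_swap (a b : bool) : (~~ a == b) = (a == ~~ b).
Proof. by case: a; case: b. Qed.

(* By [valid_signs], for [qs a = qt b] we have [qR a b] iff [src_pt a = tgt_pt b]: antipaths
   are chains for [link src_pt tgt_pt], permitted paths for [link src_pt tgt_copt]. *)
Section SignedChains.
Variable Q : quiver.
Variables sg ta : qA Q -> bool.
Hypothesis signs : valid_signs sg ta.

Definition src_pt (a : qA Q) : qV Q * bool := (qs a, sg a).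
Definition tgt_pt (a : qA Q) : qV Q * bool := (qt a, ta a).
Definition tgt_copt (a : qA Q) : qV Q * bool := (qt a, ~~ ta a).
Definition flip_pt (z : qV Q * bool) : qV Q * bool := (z.1, ~~ z.2).

Lemma src_pt_inj : injective src_pt.
Proof.
move=> a b [e1 e2]; case: signs => sg_diff _ _; apply/eqP; apply: contraT => ne.
by have := sg_diff a b ne e1; rewrite e2 eqxx.
Qed.

Lemma tgt_pt_inj : injective tgt_pt.
Proof.
move=> a b [e1 e2]; case: signs => _ ta_diff _; apply/eqP; apply: contraT => ne.
by have := ta_diff a b ne e1; rewrite e2 eqxx.
Qed.

Lemma tgt_copt_inj : injective tgt_copt.
Proof. by move=> a b [e1 /negb_inj e2]; apply: tgt_pt_inj; rewrite /tgt_pt e1 e2. Qed.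

Lemma antipath_link x y : ((qs x == qt y) && qR x y) = link src_pt tgt_pt x y.
Proof.
rewrite /link /src_pt /tgt_pt xpair_eqE.
case: (eqVneq (qs x) (qt y)) => //= e.
by case: signs => _ _ /(_ x y e) h; apply/idP/eqP; rewrite -h.
Qed.

Lemma permitted_link x y : ((qs x == qt y) && ~~ qR x y) = link src_pt tgt_copt x y.
Proof.
rewrite /link /src_pt /tgt_copt xpair_eqE.
case: (eqVneq (qs x) (qt y)) => //= e.
have -> : qR x y = (sg x == ta y) by case: signs => _ _ /(_ x y e) h; apply/idP/eqP; rewrite -h.
by case: (sg x); case: (ta y).
Qed.

Lemma isN_maximal p : isN sg ta p = maximal_chain src_pt tgt_pt p.
Proof.
case: p => [[x e]|[a w]]; rewrite /isN /maximal_chain /= ?(eq_path antipath_link) !negb_exists;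
  congr [&& _, _ & _] || congr (_ && _); apply: eq_forallb => b;
  by rewrite /src_pt /tgt_pt xpair_eqE.
Qed.

Lemma isM_maximal p : isM sg ta p = maximal_chain src_pt tgt_copt p.
Proof.
case: p => [[x e]|[a w]]; rewrite /isM /maximal_chain /= ?(eq_path permitted_link) !negb_exists;
  rewrite ?negbK; congr [&& _, _ & _] || congr (_ && _); apply: eq_forallb => b;
  by rewrite /src_pt /tgt_copt xpair_eqE ?negb_eq_swap.
Qed.

Lemma chain_src_path p : chain_src src_pt p = (psrc p, psig sg p).
Proof. by case: p => [[x e]|[a w]]. Qed.

Lemma chain_tgt_antipath p : chain_tgt tgt_pt p = (ptgt p, ptauN ta p).
Proof. by case: p => [[x e]|[a w]]. Qed.

Lemma chain_tgt_permitted p : chain_tgt tgt_copt p = (ptgt p, ~~ ptauM ta p).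
Proof. by case: p => [[x e]|[a w]] //=; rewrite negbK. Qed.

Lemma chain_elems_parrows (p : qpath Q) : chain_elems p = parrows p.
Proof. by case: p => [[x e]|[a w]]. Qed.

Lemma phiR_chains p p' : phiR sg ta p p' <->
  [/\ maximal_chain src_pt tgt_copt p, maximal_chain src_pt tgt_pt p'
    & chain_tgt tgt_pt p' = chain_tgt tgt_copt p].
Proof.
rewrite /phiR isN_maximal isM_maximal chain_tgt_antipath chain_tgt_permitted.
by split => [[h1 [h2 [-> ->]]]|[h1 h2 [-> ->]]].
Qed.

Lemma psiR_chains p p' : psiR sg ta p p' <->
  [/\ maximal_chain src_pt tgt_pt p, maximal_chain src_pt tgt_copt p'
    & chain_src src_pt p' = flip_pt (chain_src src_pt p)].
Proof.
rewrite /psiR isN_maximal isM_maximal !chain_src_path /flip_pt /=.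
by split => [[h1 [h2 [-> ->]]]|[h1 h2 [-> ->]]].
Qed.

Lemma PhiR_isN p p' : PhiR sg ta p p' -> isN sg ta p'.
Proof. by move=> [q [_ [_ []]]]. Qed.

Lemma PhiR_total p : isN sg ta p -> exists p'', PhiR sg ta p p''.
Proof.
rewrite isN_maximal => hp; have [_ /forallP hs] := maximal_chain_ends hp.
have hs' : [forall b, tgt_copt b != flip_pt (chain_src src_pt p)].
  apply/forallP => b; move: (hs b); case: (chain_src _ p) => x e.
  by rewrite /tgt_copt /tgt_pt /flip_pt !xpair_eqE /= negb_eq_swap negbK.
have [p' [hp' sp']] := maximal_chain_of_src src_pt tgt_copt_inj hs'.
have [he _] := maximal_chain_ends hp'.
have [p'' [hp'' ep'']] := maximal_chain_of_tgt tgt_pt src_pt_inj he.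
by exists p'', p'; split; [apply/psiR_chains | apply/phiR_chains].
Qed.

Lemma PhiR_functional p p1 p2 : PhiR sg ta p p1 -> PhiR sg ta p p2 -> p1 = p2.
Proof.
move=> [q1 [/psiR_chains [_ m1 s1] /phiR_chains [_ n1 e1]]].
move=> [q2 [/psiR_chains [_ m2 s2] /phiR_chains [_ n2 e2]]].
have eq : q1 = q2 by apply: (maximal_chain_src_inj src_pt_inj m1 m2); rewrite s1 s2.
by rewrite eq in e1; apply: (maximal_chain_tgt_inj tgt_pt_inj n1 n2); rewrite e1 e2.
Qed.

Lemma PhiR_injective p1 p2 p : PhiR sg ta p1 p -> PhiR sg ta p2 p -> p1 = p2.
Proof.
move=> [q1 [/psiR_chains [h1 m1 s1] /phiR_chains [_ n1 e1]]].
move=> [q2 [/psiR_chains [h2 m2 s2] /phiR_chains [_ n2 e2]]].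
have eq : q1 = q2 by apply: (maximal_chain_tgt_inj tgt_copt_inj m1 m2); rewrite -e1 -e2.
apply: (maximal_chain_src_inj src_pt_inj h1 h2).
move: s1; rewrite eq s2 /flip_pt.
by case: (chain_src _ p1) => x1 b1; case: (chain_src _ p2) => x2 b2 [-> /negb_inj ->].
Qed.

Lemma isN_finite : exists s : seq (qpath Q), forall p, isN sg ta p -> p \in s.
Proof.
apply: (enum_of_inj (g := chain_tgt tgt_pt)) => x y; rewrite !isN_maximal => hx hy.
exact: (maximal_chain_tgt_inj tgt_pt_inj hx hy).
Qed.

Lemma PhiOrb_isN p p' : isN sg ta p -> PhiOrb sg ta p p' -> isN sg ta p'.
Proof.
by move=> + H; elim: H => [a b /PhiR_isN //|a //|a b c _ IH1 _ IH2 /IH1 /IH2].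
Qed.

Lemma PhiOrb_sym p p' : isN sg ta p -> PhiOrb sg ta p p' -> PhiOrb sg ta p' p.
Proof.
have [s sN] := isN_finite.
apply: (rt_sym_finite (P := isN sg ta) (s := s)) => //.
- exact: PhiR_isN.
- exact: PhiR_total.
- exact: PhiR_functional.
- exact: PhiR_injective.
Qed.

Lemma exists_PhiRep w : isN sg ta w ->
  exists r, PhiOrb sg ta r w /\ exists x y, PhiRep sg ta x y r.
Proof.
move=> wN; have [sN sNP] := isN_finite.
have [r [wr rmin]] := exists_min_pickle (rt_refl _ (PhiR sg ta) w).
have rN : isN sg ta r := PhiOrb_isN wN wr.
set sr := undup [seq x <- sN | classicb (PhiOrb sg ta r x)].
have sr_enum : fin_enum (PhiOrb sg ta r) sr.
  split=> [|x]; first exact: undup_uniq.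
  rewrite mem_undup mem_filter; split => [h|/andP [/classicbP //]].
  by rewrite (introT (classicbP _) h) sNP //; exact: PhiOrb_isN rN h.
exists r; split; first exact: (PhiOrb_sym wN wr).
exists (size sr), (sumn (map (@plen Q) sr)); split=> //; split; last by exists sr.
by move=> y ry; apply: rmin; exact: rt_trans wr ry.
Qed.

Definition C_set : {set qA Q} := [set a | classicb (inC sg ta a)].

Lemma C_setP a : reflect (inC sg ta a) (a \in C_set).
Proof. by rewrite inE; exact: classicbP. Qed.

(* An arrow of C is terminal (else it lies on the maximal antipath through it), and its
   predecessor [b] is in C, since a maximal antipath through [b] would contain [a]. *)
Lemma inC_link a : inC sg ta a -> exists b, inC sg ta b /\ tgt_pt b = src_pt a.
Proof.
move=> aC; case: (boolP [forall b, tgt_pt b != src_pt a]) => [ta_ | ].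
  have [p [mp ap]] := maximal_chain_of_terminal src_pt_inj tgt_pt_inj ta_.
  by case: aC; exists p; rewrite isN_maximal -chain_elems_parrows.
move=> /forallPn [b]; rewrite negbK => /eqP hb; exists b; split => //.
move=> [p [hp bp]]; apply: aC; exists p; split => //.
rewrite isN_maximal in hp; rewrite -chain_elems_parrows in bp *.
exact: (maximal_chain_mem_link src_pt_inj hp bp (esym hb)).
Qed.

Definition Psi_next (a : qA Q) : qA Q :=
  if a \in C_set then odflt a [pick b | tgt_pt b == src_pt a] else a.

Lemma Psi_nextC a : a \in C_set -> tgt_pt (Psi_next a) = src_pt a /\ Psi_next a \in C_set.
Proof.
move=> aC; have [b [bC hb]] := inC_link (elimT (C_setP a) aC).
rewrite /Psi_next aC; case: pickP => [b' /eqP hb'|/(_ b)] /=; last by rewrite hb eqxx.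
have -> : b' = b by apply: tgt_pt_inj; rewrite hb hb'.
by split => //; apply/C_setP.
Qed.

Lemma Psi_next_notC a : a \notin C_set -> Psi_next a = a.
Proof. by rewrite /Psi_next => /negbTE ->. Qed.

Lemma Psi_next_inj : injective Psi_next.
Proof.
move=> a b e.
case: (boolP (a \in C_set)) => aC; case: (boolP (b \in C_set)) => bC.
- have [h1 _] := Psi_nextC aC; have [h2 _] := Psi_nextC bC.
  by apply: src_pt_inj; rewrite -h1 -h2 e.
- by have [_] := Psi_nextC aC; rewrite e Psi_next_notC // (negbTE bC).
- by have [_] := Psi_nextC bC; rewrite -e Psi_next_notC // (negbTE aC).
- by rewrite -(Psi_next_notC aC) -(Psi_next_notC bC) e.
Qed.

Lemma PsiR_next a b : PsiR sg ta a b <-> a \in C_set /\ b = Psi_next a.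
Proof.
split => [[aC [bC [e1 e2]]]|[aC ->]].
  have aC' : a \in C_set by apply/C_setP.
  split => //; have [h _] := Psi_nextC aC'.
  by apply: tgt_pt_inj; rewrite h /tgt_pt /src_pt e1 e2.
have [[e1 e2] nC] := Psi_nextC aC.
by split; [apply/C_setP | split; [apply/C_setP | ]].
Qed.

Lemma PsiOrb_fconnect a b : PsiOrb sg ta a b <-> fconnect Psi_next a b.
Proof.
split.
  elim=> [x y /PsiR_next [_ ->]|x|x y z _ h1 _ h2].
  - exact: fconnect1.
  - exact: connect0.
  - exact: connect_trans h1 h2.
move/iter_findex <-; elim: (findex Psi_next a b) => [|n IH] /=; first exact: rt_refl.
apply: rt_trans IH _; case: (boolP (iter n Psi_next a \in C_set)) => xC.
  by apply: rt_step; apply/PsiR_next.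
by rewrite Psi_next_notC //; exact: rt_refl.
Qed.

(* Maximal antipaths correspond to their target points, i.e. to the pairs [(x, e)] not of
   the form [src_pt a]. *)
Lemma size_enum_N s : fin_enum (isN sg ta) s -> size s + #|qA Q| = 2 * #|qV Q|.
Proof.
move=> [us hs].
set sinks := [set z | [forall b, src_pt b != z]].
have e1 : #|sinks| = size (map (chain_tgt tgt_pt) s).
  apply: card_enum.
    rewrite map_inj_in_uniq // => x y /hs hx /hs hy.
    rewrite !isN_maximal in hx hy; exact: (maximal_chain_tgt_inj tgt_pt_inj hx hy).
  move=> z; rewrite [_ z]inE; split => [hz|/mapP [x /hs hx ->]].
    have [q [hq <-]] := maximal_chain_of_tgt tgt_pt src_pt_inj hz.
    by apply: map_f; apply/hs; rewrite isN_maximal.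
  by rewrite isN_maximal in hx; case: (maximal_chain_ends hx).
have e2 : #|sinks| = #|~: [set src_pt b | b in [set: qA Q]]|.
  apply: eq_card => z; rewrite !inE; apply/forallP/idP.
    by move=> h; apply/imsetP => [[b _ eb]]; have := h b; rewrite eb eqxx.
  by move=> h b; apply: contra h => /eqP eb; apply/imsetP; exists b.
have := cardsC [set src_pt b | b in [set: qA Q]].
rewrite card_imset; last exact: src_pt_inj.
by rewrite cardsT card_prod card_bool -e2 e1 size_map addnC mulnC.
Qed.

(* The maximal antipaths partition the arrows outside [C]. *)
Lemma sumn_plen_enum_N s : fin_enum (isN sg ta) s -> sumn (map (@plen Q) s) = #|~: C_set|.
Proof.
move=> [us hs].
have -> : sumn (map (@plen Q) s) = size (flatten (map (@parrows Q) s)).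
  by rewrite size_flatten /shape -map_comp; congr sumn; apply: eq_map => [[[]|[]]].
symmetry; apply: card_enum.
  apply: flatten_uniq => // [x /hs|x y c /hs hx /hs hy]; rewrite -?chain_elems_parrows.
    by rewrite isN_maximal => hx; exact: (maximal_chain_uniq tgt_pt_inj hx).
  rewrite !isN_maximal in hx hy.
  exact: (maximal_chain_disjoint src_pt_inj tgt_pt_inj hx hy).
move=> c; rewrite [_ c]inE; split => [/C_setP cC|/flattenP [l /mapP [x /hs xs ->] cx]].
  case: (classic (exists q, isN sg ta q /\ c \in parrows q)) => [[q [hq cq]]|nex].
    by apply/flattenP; exists (parrows q) => //; apply: map_f; apply/hs.
  by case: cC; exact: nex.
by apply/C_setP => cC; apply: cC; exists x.
Qed.

End SignedChains.

Section PsiOrbits.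
Variable Q : quiver.
Variables sg ta : qA Q -> bool.
Hypothesis signs : valid_signs sg ta.

Local Notation Psi := (Psi_next sg ta).

Lemma fconnect_Psi_C a b : a \in C_set sg ta -> fconnect Psi a b -> b \in C_set sg ta.
Proof.
move=> aC /iter_findex <-; elim: (findex Psi a b) => //= n IH.
by have [_ ->] := Psi_nextC signs IH.
Qed.

Definition Psi_rep (a : qA Q) : qA Q := [arg min_(b < a | fconnect Psi a b) pickle b].

Lemma Psi_repP a : fconnect Psi a (Psi_rep a) /\
  forall b, fconnect Psi a b -> pickle (Psi_rep a) <= pickle b.
Proof. by rewrite /Psi_rep; case: arg_minnP => //; exact: connect0. Qed.

Lemma Psi_rep_eq a r : fconnect Psi a r ->
  (forall b, fconnect Psi a b -> pickle r <= pickle b) -> Psi_rep a = r.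
Proof.
move=> ar hr; have [h1 h2] := Psi_repP a.
by apply: (pcan_inj pickleK); apply/eqP; rewrite eqn_leq h2 // hr.
Qed.

Lemma Psi_rep_connect a b : fconnect Psi a b -> Psi_rep a = Psi_rep b.
Proof.
move=> ab; have [h1 h2] := Psi_repP b.
have same := same_connect (fconnect_sym (Psi_next_inj signs)) ab.
by apply: Psi_rep_eq => [|c]; [exact: connect_trans ab h1 | rewrite same; exact: h2].
Qed.

Lemma Psi_rep_id a : Psi_rep (Psi_rep a) = Psi_rep a.
Proof. by rewrite -(Psi_rep_connect (proj1 (Psi_repP a))). Qed.

Lemma Psi_rep_C a : a \in C_set sg ta -> Psi_rep a \in C_set sg ta.
Proof. by move=> aC; exact: fconnect_Psi_C aC (proj1 (Psi_repP a)). Qed.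

Lemma PsiRepP y r : PsiRep sg ta 0 y r <->
  [/\ r \in C_set sg ta, Psi_rep r = r & order Psi r = y].
Proof.
have orbE b : PsiOrb sg ta r b <-> fconnect Psi r b := PsiOrb_fconnect signs r b.
split=> [[_ [/C_setP rC [rmin [s [[us hs] <-]]]]]|[rC rr <-]].
  split=> //.
    by apply: Psi_rep_eq => [|b /orbE /rmin //]; exact: connect0.
  by rewrite /order; apply: card_enum => // b; rewrite -hs; split=> /orbE.
do 2!split=> //; first exact/C_setP.
split; first by move=> b /orbE rb; rewrite -rr; exact: (proj2 (Psi_repP r)).
exists (orbit Psi r); split; last exact: size_orbit.
by split=> [|b]; [exact: orbit_uniq | rewrite -fconnect_orbit; exact: orbE].
Qed.

End PsiOrbits.

Section Distribution.
Variable Q : quiver.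
Variables (sg ta : qA Q -> bool) (m p : nat).
Hypotheses (signs : valid_signs sg ta)
  (f_eq : forall x y : nat,
     f_is sg ta x y (m * ((x == 0) && (y == 3)) + ((x == p + m + 2) && (y == p)))).

Local Notation Psi := (Psi_next sg ta).

Lemma PhiRep_values x y r : PhiRep sg ta x y r -> x = p + m + 2 /\ y = p.
Proof.
move=> rep; have [_ [_ [s [orb [x_eq _]]]]] := rep.
have x_gt0 : 0 < x by rewrite -x_eq; exact: fin_enum_size_gt0 orb (rt_refl _ _ r).
have [n1 [n2 [hn [[s1 [s1_enum sz1]] _]]]] := f_eq x y.
have := fin_enum_size_gt0 s1_enum rep; rewrite sz1.
move: hn; rewrite (negbTE (lt0n_neq0 x_gt0)) muln0 /=.
by case: andP => [[/eqP -> /eqP ->] //|_ hn]; lia.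
Qed.

(* The hypothesis on [f] leaves a single Phi-orbit, which must then contain all of [N]. *)
Lemma enum_N : exists s, [/\ fin_enum (isN sg ta) s, size s = p + m + 2 &
  sumn (map (@plen Q) s) = p].
Proof.
have [n1 [n2 [hn [[s1 [[us1 s1P] sz1]] [s2 [[_ s2P] sz2]]]]]] := f_eq (p + m + 2) p.
have {}hn : n1 + n2 = 1 by rewrite -hn addn2 /= muln0 !eqxx.
have n2_0 : n2 = 0.
  by case: s2 s2P sz2 => [|r s2 /(_ r) [_ /(_ (mem_head _ _)) [+ _]] <-] //; rewrite addn2.
rewrite n2_0 addn0 in hn; rewrite hn in sz1.
case: s1 us1 s1P sz1 => [|w0 [|? ?]] // _ s1P _.
have [w0N [_ [s0 [[us0 s0P] [sz sm]]]]] := proj2 (s1P w0) (mem_head _ _).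
exists s0; split=> //; split=> // w; rewrite -s0P; split; last exact: PhiOrb_isN.
move=> wN; have [r [rw [x [y rep]]]] := exists_PhiRep signs wN.
have [ex ey] := PhiRep_values rep; rewrite ex ey in rep.
by move: (s1P r) => [/(_ rep)]; rewrite inE => /eqP <-.
Qed.

Lemma order_Psi_next a : a \in C_set sg ta -> order Psi a = 3.
Proof.
move=> aC; set r := Psi_rep sg ta a.
have ar : fconnect Psi a r := proj1 (Psi_repP sg ta a).
rewrite /order (eq_card (same_connect (fconnect_sym (Psi_next_inj signs)) ar)) -/(order Psi r).
have rep : PsiRep sg ta 0 (order Psi r) r.
  by apply/(PsiRepP signs); split; [exact: Psi_rep_C | exact: Psi_rep_id |].
have [n1 [n2 [hn [_ [s2 [s2_enum sz2]]]]]] := f_eq 0 (order Psi r).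
have := fin_enum_size_gt0 s2_enum rep; rewrite sz2.
by move: hn; rewrite eqxx addn2 /= addn0; case: eqP => // _; rewrite muln0; lia.
Qed.

Definition Psi_reps : {set qA Q} := [set r in C_set sg ta | Psi_rep sg ta r == r].

Lemma Psi_repsP r : r \in Psi_reps <-> PsiRep sg ta 0 3 r.
Proof.
rewrite (PsiRepP signs) inE; split=> [/andP [rC /eqP rr]|[-> -> _]]; last by rewrite eqxx.
by split=> //; exact: order_Psi_next.
Qed.

Lemma card_Psi_reps : #|Psi_reps| = m.
Proof.
have [n1 [n2 [hn [[s1 [s1_enum sz1]] [s2 [[us2 s2P] sz2]]]]]] := f_eq 0 3.
have n1_0 : n1 = 0.
  case: s1 s1_enum sz1 => [|r s1] s1_enum <- //.
  have [_ [_ [s [orb [sz _]]]]] := proj2 (s1_enum.2 r) (mem_head _ _).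
  by have := fin_enum_size_gt0 orb (rt_refl _ _ r); rewrite sz.
move: hn; rewrite n1_0 -sz2 /= addn2 /= addn0 muln1 => ->.
by apply: card_enum => // r; rewrite -s2P -Psi_repsP.
Qed.

Lemma card_C : #|C_set sg ta| = 3 * m.
Proof.
rewrite -card_Psi_reps -sum1_card (partition_big (Psi_rep sg ta) (mem Psi_reps)); last first.
  by move=> a aC; rewrite /= inE (Psi_rep_C signs aC) (Psi_rep_id signs) eqxx.
rewrite mulnC -sum_nat_const; apply: eq_bigr => r.
rewrite -[mem Psi_reps r]/(r \in Psi_reps) inE => /andP [rC /eqP rr].
rewrite sum1dep_card -(order_Psi_next rC); apply: eq_card => a; rewrite inE.
change ((a \in C_set sg ta) && (Psi_rep sg ta a == r) = fconnect Psi r a).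
apply/andP/idP => [[aC /eqP <-]|ra].
  by rewrite (fconnect_sym (Psi_next_inj signs)); exact: (proj1 (Psi_repP sg ta a)).
by rewrite (fconnect_Psi_C signs rC ra) -(Psi_rep_connect signs ra) rr.
Qed.

Section TriangleSelection.
Variable D : {set qA Q}.
Hypothesis D_sel : triangle_selection sg ta D.

Lemma D_C d : d \in D -> d \in C_set sg ta.
Proof. by move=> /(proj1 D_sel) [dC _]; apply/C_setP. Qed.

Lemma card_triangle_selection : #|D| = m.
Proof.
have rep_inj : {in D &, injective (Psi_rep sg ta)}.
  move=> d1 d2 d1D d2D e.
  have c12 : fconnect Psi d1 d2.
    apply: connect_trans (proj1 (Psi_repP sg ta d1)) _.
    by rewrite e (fconnect_sym (Psi_next_inj signs)); exact: (proj1 (Psi_repP sg ta d2)).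
  have [x [_ x_uniq]] := proj2 D_sel d1 (proj1 D_sel d1 d1D).
  rewrite -(x_uniq d1 (conj d1D (rt_refl _ _ _))).
  by apply: x_uniq; split => //; apply/(PsiOrb_fconnect signs).
rewrite -card_Psi_reps -(card_in_imset rep_inj); apply: eq_card => r.
apply/imsetP/idP => [[d dD ->]|rR].
  by rewrite inE (Psi_rep_C signs (D_C dD)) (Psi_rep_id signs) eqxx.
have [_ [rC [_ [s [orb sz]]]]] := proj1 (Psi_repsP r) rR.
have [d [[dD rd] _]] := proj2 D_sel r (conj rC (ex_intro _ s (conj orb sz))).
exists d => //; move: rR; rewrite inE => /andP [_ /eqP rr].
by rewrite -(Psi_rep_connect signs (proj1 (PsiOrb_fconnect signs r d) rd)) rr.
Qed.

Lemma Psi_next_notin_D d : d \in D -> Psi d \notin D /\ Psi (Psi d) \notin D.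
Proof.
move=> dD; have [x [_ x_uniq]] := proj2 D_sel d (proj1 D_sel d dD).
have dx := x_uniq d (conj dD (rt_refl _ _ _)).
have in_D_eq k : iter k Psi d \in D -> iter k Psi d = d.
  move=> kD; rewrite -[RHS]dx; symmetry; apply: x_uniq; split=> //.
  by apply/(PsiOrb_fconnect signs); exact: fconnect_iter.
have := orbit_uniq Psi d; rewrite /orbit order_Psi_next ?D_C //= !inE andbT negb_or.
case/andP => /andP [d_ne_b d_ne_c] _.
split; apply/negP.
  by move=> /(in_D_eq 1) /= e; move: d_ne_b; rewrite [X in _ != X]e eqxx.
by move=> /(in_D_eq 2) /= e; move: d_ne_c; rewrite [X in _ != X]e eqxx.
Qed.

(* The two other arrows of the triangle of [d] form a path from [qt d] to [qs d]. *)
Lemma triangle_arc_connect d : d \in D -> connect (@qadj (qremove D)) (qs d) (qt d).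
Proof.
move=> dD; have [bD cD] := Psi_next_notin_D dD.
have dC := D_C dD; have [[e1 _] bC] := Psi_nextC signs dC.
have [[e2 _] cC] := Psi_nextC signs bC; have [[e3 _] _] := Psi_nextC signs cC.
have Psi3 : Psi (Psi (Psi d)) = d.
  by have := iter_order (Psi_next_inj signs) d; rewrite order_Psi_next.
rewrite Psi3 in e3; rewrite -e1 e3.
apply: connect_trans (connect1 (proj2 (andP (qremove_adj bD)))) _; rewrite -e2.
exact: connect1 (proj2 (andP (qremove_adj cD))).
Qed.

End TriangleSelection.

End Distribution.

Unset Implicit Arguments.
Set Strict Implicit.

Theorem lemma6p2 (Q : quiver) (sg ta : qA Q -> bool) (m p : nat) (D : {set qA Q}) :
  gentle Q -> valid_signs sg ta ->
  (forall x y : nat,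
     f_is sg ta x y (m * ((x == 0) && (y == 3)) + ((x == p + m + 2) && (y == p)))) ->
  triangle_selection sg ta D ->
  gentle (qremove D) /\ #|qV (qremove D)| = #|qA (qremove D)|.+1.
Proof.
move=> Q_gentle signs f_eq D_sel.
split; first exact: qremove_gentle Q_gentle (triangle_arc_connect signs f_eq D_sel).
have [s [s_enum s_size s_len]] := enum_N signs f_eq.
have N_count := size_enum_N signs s_enum.
have notC_count := sumn_plen_enum_N signs s_enum.
have C_count := card_C signs f_eq.
have D_count := card_triangle_selection signs f_eq D_sel.
have := cardsC (C_set sg ta); have := cardsC D.
rewrite card_qremove_arrows /= -notC_count s_len C_count D_count s_size in N_count *.
lia.
Qed.
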